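(* Let $d\ge2$ and $g=\sum_{\mathbf k\in\mathbb Z^d}g_{\mathbf k}u^{\mathbf k}\in R_d$. Then $g\in (f^{(d)})+\mathscr I_d^3$ if and only if all of the following hold: (A) $\sum_{\mathbf k}g_{\mathbf k}=0$; (B) $\sum_{\mathbf k}g_{\mathbf k}k_i=0$ for $i=1,\dots,d$; (C) $\sum_{\mathbf k}g_{\mathbf k}k_ik_j=0$ for $1\le i\ne j\le d$; (D) $\sum_{\mathbf k}g_{\mathbf k}(k_i^2-k_j^2)=0$ for $1\le i\ne j\le d$, where $\mathbf k=(k_1,\dots,k_d)$.
   Context: $R_d=\mathbb Z[u_1^{\pm1},\dots,u_d^{\pm1}]$, $u^{\mathbf k}=u_1^{k_1}\cdots u_d^{k_d}$. $f^{(d)}=2d-\sum_{i=1}^d(u_i+u_i^{-1})$, $(f^{(d)})=f^{(d)}R_d$. $\mathscr I_d=\{h\in R_d:h(1,\dots,1)=0\}$, and $\mathscr I_d^3$ is its third power. *)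

(* Laurent polynomials in d variables over Z are modelled as
   finite formal sums of terms c * u^k, i.e. lists of (coefficient, exponent)
   pairs; two lists represent the same element of R_d iff all their
   coefficients agree (lequiv). *)
From HB Require Import structures.
From mathcomp Require Import all_boot all_order all_algebra.
Set Implicit Arguments. Unset Strict Implicit. Unset Printing Implicit Defensive.
Import Order.TTheory GRing.Theory Num.Theory.
Local Open Scope ring_scope.

Definition mono (d : nat) := {ffun 'I_d -> int}.
Definition laurent (d : nat) := seq (int * mono d).

Definition lmul d (p q : laurent d) : laurent d :=
  [seq (a.1 * b.1, [ffun i => a.2 i + b.2 i] : mono d) | a : int * mono d <- p, b : int * mono d <- q].
Definition ladd d (p q : laurent d) : laurent d := p ++ q.

Definition coef d (p : laurent d) (k : mono d) : int :=
  \sum_(t <- p | t.2 == k) t.1.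
Definition lequiv d (p q : laurent d) : Prop := forall k, coef p k = coef q k.
(* exponents possibly occurring in p (a superset of the support) *)
Definition lsupp d (p : laurent d) : seq (mono d) := undup (map snd p).

Definition evec d (i : 'I_d) : mono d := [ffun j => ((i == j) : nat)%:Z].
Definition nvec d (i : 'I_d) : mono d := [ffun j => - ((i == j) : nat)%:Z].

Definition fd (d : nat) : laurent d :=
  (2 * (d%:Z), [ffun _ => 0]) ::
    ([seq (-1, evec i) | i <- enum 'I_d] ++ [seq (-1, nvec i) | i <- enum 'I_d]).

Definition eval1 d (p : laurent d) : int := \sum_(t <- p) t.1.
Definition inI d (p : laurent d) : Prop := eval1 p = 0.
Definition inI3 d (p : laurent d) : Prop :=
  exists s : seq (laurent d * laurent d * laurent d),
    (forall x, x \in s -> [/\ inI x.1.1, inI x.1.2 & inI x.2]) /\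
    lequiv p (flatten [seq lmul (lmul x.1.1 x.1.2) x.2 | x <- s]).
Definition in_fI3 d (g : laurent d) : Prop :=
  exists h r : laurent d, inI3 r /\ lequiv g (ladd (lmul (fd d) h) r).

From HB Require Import structures.
From mathcomp Require Import all_boot all_order all_algebra generic_quotient.
From mathcomp Require Import ring.
Import Order.TTheory GRing.Theory Num.Theory.
Local Open Scope ring_scope.
Set Implicit Arguments. Unset Strict Implicit. Unset Printing Implicit Defensive.

(* Necessity: the moments m0, m1_i, M2_ij satisfy Leibniz rules, so they vanish
   on I^3, while on f*h one finds m0 = m1_i = 0 and M2_ij = -2 delta_ij m0(h).
   Sufficiency: by induction on k along unit steps k <-> k + e_l,
     u^k = 1 + sum_i k_i X_i + sum_i C(k_i,2) X_i^2 + sum_(j<i) k_i k_j X_i X_j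
   modulo I^3, where X_i = u_i - 1.  Summing against the coefficients of p shows
   that p lies in I^3 as soon as m0, m1_i and all M2_ij vanish.  Under (A)-(D)
   this holds for p = g - f*h with h the constant -C(g), where 2 C(g) is the
   common value of the M2_ii(g). *)

(* The binomial coefficient C(z, 2) = z(z-1)/2 of an integer z, the coefficient
   of X^2 in the expansion of (1 + X)^z. *)
Definition bin2z (z : int) : int :=
  match z with Posz n => 'C(n, 2) | Negz n => 'C(n.+2, 2) end.

Lemma bin2zS z : bin2z (z + 1) = bin2z z + z.
Proof.
case: z => [n|[|n]]; first by rewrite -PoszD addn1 /= binS bin1 PoszD.
  by rewrite /= binn.
have -> : Negz n.+1 + 1 = Negz n by rewrite !NegzE -(addn1 n.+1) PoszD opprD subrK.
by rewrite /= [in RHS]binS bin1 PoszD NegzE -[n.+2]addn1 PoszD; ring.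
Qed.

Lemma bin2zE z : bin2z z *+ 2 = z * z - z.
Proof.
elim/int_rec: z => [//|n IH|n IH].
  by rewrite -addn1 PoszD bin2zS mulrnDl IH; ring.
apply/(addIr ((- n.+1%:Z) *+ 2)); rewrite -mulrnDl -bin2zS.
by rewrite -[n.+1]addn1 PoszD opprD subrK IH; ring.
Qed.

Section Laurent.
Variable d : nat.
Local Notation L := (laurent d).
Local Notation M := (mono d).

Definition madd (k k' : M) : M := [ffun i => k i + k' i].
Definition msub (k k' : M) : M := [ffun i => k i - k' i].
Definition mz : M := [ffun _ => 0].

Definition lneg (p : L) : L := [seq (- t.1, t.2) | t <- p].

Lemma coefE (p : L) k : coef p k = \sum_(t <- p) (if t.2 == k then t.1 else 0).
Proof. by rewrite /coef big_mkcond. Qed.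

Lemma coef_nil k : coef ([::] : L) k = 0.
Proof. by rewrite /coef big_nil. Qed.

Lemma coef_cat (p q : L) k : coef (p ++ q) k = coef p k + coef q k.
Proof. by rewrite /coef big_cat. Qed.

Lemma coef_neg (p : L) k : coef (lneg p) k = - coef p k.
Proof. by rewrite /coef big_map sumrN. Qed.

Lemma coef1 c k k' : coef ([:: (c, k)] : L) k' = if k == k' then c else 0.
Proof. by rewrite coefE big_cons big_nil addr0. Qed.

Lemma coef_out (p : L) k : k \notin lsupp p -> coef p k = 0.
Proof.
move=> kNp; rewrite /coef big1_seq // => t /andP[/eqP tk tp]; case/negP: kNp.
by rewrite /lsupp mem_undup -tk (map_f snd tp).
Qed.

Lemma madd_eqE (a b k : M) : (madd a b == k) = (b == msub k a).
Proof.
by apply/eqP/eqP => [<-|->]; apply/ffunP => i; rewrite !ffunE; ring.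
Qed.

Lemma coef_lmull (p q : L) k :
  coef (lmul p q) k = \sum_(a <- p) a.1 * coef q (msub k a.2).
Proof.
rewrite coefE /lmul big_allpairs_dep /=; apply: eq_bigr => a _.
rewrite coefE big_distrr /=; apply: eq_bigr => b _.
by rewrite -[[ffun i => _]]/(madd a.2 b.2) madd_eqE; case: ifP; rewrite ?mulr0.
Qed.

Lemma coef_lmulr (p q : L) k :
  coef (lmul p q) k = \sum_(b <- q) b.1 * coef p (msub k b.2).
Proof.
rewrite coefE /lmul big_allpairs_dep /= exchange_big /=; apply: eq_bigr => b _.
rewrite coefE big_distrr /=; apply: eq_bigr => a _.
have -> : ([ffun i => a.2 i + b.2 i] == k) = (a.2 == msub k b.2).
  by rewrite -madd_eqE; congr (_ == _); apply/ffunP => i; rewrite !ffunE addrC.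
by case: ifP; rewrite ?mulr0 // mulrC.
Qed.

Definition mom (phi : M -> int) (p : L) : int := \sum_(t <- p) t.1 * phi t.2.

Lemma mom_cat phi (p q : L) : mom phi (p ++ q) = mom phi p + mom phi q.
Proof. by rewrite /mom big_cat. Qed.

Lemma mom_neg phi (p : L) : mom phi (lneg p) = - mom phi p.
Proof. by rewrite /mom big_map -sumrN; apply: eq_bigr => t _; rewrite mulNr. Qed.

Lemma mom_lmul phi (p q : L) : mom phi (lmul p q) =
  \sum_(a <- p) \sum_(b <- q) a.1 * b.1 * phi (madd a.2 b.2).
Proof. by rewrite /mom /lmul big_allpairs_dep. Qed.

Lemma mom_flatten phi (ps : seq L) : mom phi (flatten ps) = \sum_(p <- ps) mom phi p.
Proof. by rewrite /mom big_flatten. Qed.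

Lemma mom_coefs phi (p : L) (s : seq M) : uniq s -> {subset map snd p <= s} ->
  mom phi p = \sum_(k <- s) coef p k * phi k.
Proof.
move=> s_uniq ps.
transitivity (\sum_(k <- s) \sum_(t <- p) (if t.2 == k then t.1 * phi t.2 else 0)).
  rewrite exchange_big /mom big_seq [RHS]big_seq; apply: eq_bigr => t tp.
  rewrite (bigD1_seq t.2) ?ps ?(map_f snd tp) //= eqxx big1 ?addr0 // => k.
  by rewrite eq_sym => /negbTE ->.
apply: eq_bigr => k _; rewrite coefE big_distrl /=; apply: eq_bigr => t _.
by case: eqP => [->|]; rewrite ?mul0r.
Qed.

Lemma mom_lsupp phi (p : L) : \sum_(k <- lsupp p) coef p k * phi k = mom phi p.
Proof. by rewrite (@mom_coefs phi p (lsupp p)) ?undup_uniq // => k; rewrite mem_undup. Qed.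

Lemma mom_equiv phi (p q : L) : lequiv p q -> mom phi p = mom phi q.
Proof.
move=> pq; have s_uniq : uniq (lsupp (p ++ q)) by exact: undup_uniq.
rewrite !(@mom_coefs phi _ (lsupp (p ++ q))) //; first by apply: eq_bigr => k _; rewrite pq.
  by move=> k kq; rewrite mem_undup map_cat mem_cat kq orbT.
by move=> k kp; rewrite mem_undup map_cat mem_cat kp.
Qed.

Definition lequivb (p q : L) : bool :=
  all (fun k => coef p k == coef q k) (lsupp (p ++ q)).

Lemma lequivP p q : reflect (lequiv p q) (lequivb p q).
Proof.
apply: (iffP allP) => [pq k|pq k _]; last by rewrite pq.
have [/pq/eqP //|] := boolP (k \in lsupp (p ++ q)).
rewrite /lsupp mem_undup map_cat mem_cat negb_or => /andP[kp kq].
by rewrite !coef_out // /lsupp mem_undup.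
Qed.

Lemma lequivb_refl : reflexive lequivb.
Proof. by move=> p; apply/lequivP. Qed.
Lemma lequivb_sym : symmetric lequivb.
Proof. by move=> p q; apply/lequivP/lequivP => pq k; rewrite pq. Qed.
Lemma lequivb_trans : transitive lequivb.
Proof. by move=> q p r /lequivP pq /lequivP qr; apply/lequivP => k; rewrite pq qr. Qed.

Canonical lequiv_equiv := EquivRel lequivb lequivb_refl lequivb_sym lequivb_trans.

Local Open Scope quotient_scope.

Definition Lq := {eq_quot lequivb}.
HB.instance Definition _ : EqQuotient _ lequivb Lq := EqQuotient.on Lq.
HB.instance Definition _ := Choice.on Lq.

Local Notation Pi := (\pi_Lq).

Lemma eqPi (p q : L) : Pi p = Pi q <-> lequiv p q.
Proof. by split=> [/eqmodP /lequivP|/lequivP /eqmodP]. Qed.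

Lemma coef_repr (p : L) k : coef (repr (Pi p)) k = coef p k.
Proof. by move: k; apply/eqPi; rewrite reprK. Qed.

(* The ring operations of R_d are lifted from fresh names for concatenation and
   [lmul], which serve as keys for the canonical [piE] morphism instances. *)
Definition ladd' (p q : L) : L := p ++ q.
Definition lmul' (p q : L) : L := lmul p q.

Definition Lq_add := lift_op2 Lq ladd'.
Lemma pi_add : {morph Pi : x y / ladd' x y >-> Lq_add x y}.
Proof. by move=> x y; unlock Lq_add; apply/eqPi => k; rewrite !coef_cat !coef_repr. Qed.
Canonical pi_add_morph := PiMorph2 pi_add.

Definition Lq_opp := lift_op1 Lq lneg.
Lemma pi_opp : {morph Pi : x / lneg x >-> Lq_opp x}.
Proof. by move=> x; unlock Lq_opp; apply/eqPi => k; rewrite !coef_neg !coef_repr. Qed.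
Canonical pi_opp_morph := PiMorph1 pi_opp.

Definition Lq_mul := lift_op2 Lq lmul'.
Lemma pi_mul : {morph Pi : x y / lmul' x y >-> Lq_mul x y}.
Proof.
move=> x y; unlock Lq_mul; apply/eqPi => k; symmetry; rewrite /lmul'.
rewrite coef_lmull; under eq_bigr do rewrite coef_repr.
by rewrite -coef_lmull coef_lmulr; under eq_bigr do rewrite coef_repr; rewrite -coef_lmulr.
Qed.
Canonical pi_mul_morph := PiMorph2 pi_mul.

Definition Lq_zero := lift_cst Lq ([::] : L).
Canonical pi_zero_morph := PiConst Lq_zero.
Definition Lq_one := lift_cst Lq ([:: (1, mz)] : L).
Canonical pi_one_morph := PiConst Lq_one.

Lemma Lq_addA : associative Lq_add.
Proof. by elim/quotW=> x; elim/quotW=> y; elim/quotW=> z; rewrite !piE /ladd' catA. Qed.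
Lemma Lq_addC : commutative Lq_add.
Proof.
by elim/quotW=> x; elim/quotW=> y; rewrite !piE; apply/eqPi => k; rewrite !coef_cat addrC.
Qed.
Lemma Lq_add0 : left_id Lq_zero Lq_add.
Proof. by elim/quotW=> x; rewrite !piE. Qed.
Lemma Lq_addN : left_inverse Lq_zero Lq_opp Lq_add.
Proof.
by elim/quotW=> x; rewrite !piE; apply/eqPi => k; rewrite coef_cat coef_neg coef_nil addNr.
Qed.
HB.instance Definition _ := GRing.isZmodule.Build Lq Lq_addA Lq_addC Lq_add0 Lq_addN.

Lemma Lq_mulA : associative Lq_mul.
Proof.
elim/quotW=> x; elim/quotW=> y; elim/quotW=> z; rewrite !piE; apply/eqPi => k.
rewrite /lmul' coef_lmull [RHS]coef_lmull /lmul big_allpairs_dep /=.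
apply: eq_bigr => a _; rewrite coef_lmull big_distrr /=; apply: eq_bigr => b _.
rewrite mulrA; congr (_ * coef _ _); apply/ffunP => i; rewrite !ffunE; ring.
Qed.
Lemma Lq_mulC : commutative Lq_mul.
Proof.
elim/quotW=> x; elim/quotW=> y; rewrite !piE; apply/eqPi => k.
by rewrite /lmul' coef_lmull coef_lmulr.
Qed.
Lemma Lq_mul1 : left_id Lq_one Lq_mul.
Proof.
elim/quotW=> x; rewrite !piE; apply/eqPi => k.
rewrite /lmul' coef_lmull big_cons big_nil addr0 mul1r; congr coef.
by apply/ffunP => i; rewrite !ffunE subr0.
Qed.
Lemma Lq_mulDl : left_distributive Lq_mul Lq_add.
Proof.
elim/quotW=> x; elim/quotW=> y; elim/quotW=> z; rewrite !piE; apply/eqPi => k.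
by rewrite /lmul' /ladd' coef_cat !coef_lmull big_cat.
Qed.
Lemma Lq_one_neq0 : Lq_one != Lq_zero.
Proof.
by rewrite !piE; apply/negP => /lequivP/(_ mz); rewrite coef_nil coef1 eqxx.
Qed.
HB.instance Definition _ :=
  GRing.Zmodule_isComNzRing.Build Lq Lq_mulA Lq_mulC Lq_mul1 Lq_mulDl Lq_one_neq0.

Lemma PiD (p q : L) : Pi (p ++ q) = Pi p + Pi q.
Proof. by rewrite -[p ++ q]/(ladd' p q) piE. Qed.
Lemma PiM (p q : L) : Pi (lmul p q) = Pi p * Pi q.
Proof. by rewrite -[lmul p q]/(lmul' p q) piE. Qed.
Lemma PiN (p : L) : Pi (lneg p) = - Pi p.
Proof. by rewrite piE. Qed.
Lemma Pi0 : Pi [::] = 0.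
Proof. by rewrite -[0]/Lq_zero piE. Qed.

Definition mon (k : M) : Lq := Pi [:: (1, k)].

Lemma monD k k' : mon (madd k k') = mon k * mon k'.
Proof. by rewrite /mon -PiM /lmul /= mulr1. Qed.

Lemma mon0 : mon mz = 1.
Proof. by rewrite -[1]/Lq_one piE. Qed.

Lemma Pi_term c k : Pi [:: (c, k)] = mon k *~ c.
Proof.
have PiD1 a b : Pi [:: (a + b, k)] = Pi [:: (a, k)] + Pi [:: (b, k)].
  by rewrite -PiD; apply/eqPi => k'; rewrite coef_cat !coef1; case: ifP; rewrite ?addr0.
have Pi_0 : Pi [:: (0, k)] = 0.
  by rewrite -Pi0; apply/eqPi => k'; rewrite coef1 coef_nil; case: ifP.
elim/int_rec: c => [|n IH|n IH]; first by rewrite Pi_0.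
  by rewrite -add1n PoszD PiD1 IH mulrzDr addrC.
have := PiD1 (- n.+1%:Z) 1; rewrite -/(mon k) (_ : _ + 1 = - n%:Z) ?IH => [E|]; last first.
  by rewrite -addn1 PoszD opprD addrNK.
rewrite -(addrK (mon k) (Pi _)) -E -[X in _ - X]mulr1z -mulrzBr.
by rewrite -addn1 PoszD opprD.
Qed.

Lemma Pi_sum (p : L) : Pi p = \sum_(t <- p) mon t.2 *~ t.1.
Proof.
elim: p => [|t p IH]; first by rewrite big_nil Pi0.
by rewrite big_cons -cat1s PiD IH -Pi_term; case: t.
Qed.

Lemma Pi_flatten (ps : seq L) : Pi (flatten ps) = \sum_(p <- ps) Pi p.
Proof. by elim: ps => [|p ps IH]; rewrite ?big_nil ?Pi0 // big_cons /= PiD IH. Qed.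

Definition ev (a : Lq) : int := eval1 (repr a).

Lemma eval1_mom (p : L) : eval1 p = mom (fun=> 1) p.
Proof. by apply: eq_bigr => t _; rewrite mulr1. Qed.

Lemma evPi p : ev (Pi p) = eval1 p.
Proof. by rewrite /ev !eval1_mom; apply: mom_equiv => k; exact: coef_repr. Qed.

Lemma eval1_lmul (p q : L) : eval1 (lmul p q) = eval1 p * eval1 q.
Proof.
rewrite /eval1 /lmul big_allpairs_dep big_distrl; apply: eq_bigr => a _.
by rewrite big_distrr.
Qed.

Lemma evM : {morph ev : x y / x * y}.
Proof. by elim/quotW=> p; elim/quotW=> q; rewrite -PiM !evPi eval1_lmul. Qed.

Definition inI3q (z : Lq) : Prop := exists s : seq (Lq * Lq * Lq),
  (forall x, x \in s -> [/\ ev x.1.1 = 0, ev x.1.2 = 0 & ev x.2 = 0]) /\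
  z = \sum_(x <- s) x.1.1 * x.1.2 * x.2.

Lemma inI3q0 : inI3q 0.
Proof. by exists [::]; rewrite big_nil. Qed.

Lemma inI3qD z w : inI3q z -> inI3q w -> inI3q (z + w).
Proof.
move=> [s [Is ->]] [s' [Is' ->]]; exists (s ++ s'); split; last by rewrite big_cat.
by move=> x; rewrite mem_cat => /orP[/Is|/Is'].
Qed.

Lemma inI3qM y z : inI3q z -> inI3q (y * z).
Proof.
move=> [s [Is ->]]; exists [seq (y * x.1.1, x.1.2, x.2) | x <- s]; split.
  by move=> _ /mapP[x /Is[a0 b0 c0] ->]; rewrite /= evM a0 mulr0.
by rewrite big_map big_distrr; apply: eq_bigr => x _; rewrite /= !mulrA.
Qed.

Lemma inI3q_prod a b c : ev a = 0 -> ev b = 0 -> ev c = 0 -> inI3q (a * b * c).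
Proof.
move=> a0 b0 c0; exists [:: (a, b, c)]; rewrite big_seq1; split => // x.
by rewrite inE => /eqP ->.
Qed.

Lemma inI3qB z w : inI3q z -> inI3q w -> inI3q (z - w).
Proof. by move=> Iz Iw; apply: inI3qD => //; rewrite -mulN1r; apply: inI3qM. Qed.

Lemma inI3qMz z n : inI3q z -> inI3q (z *~ n).
Proof. by rewrite -mulrzl; apply: inI3qM. Qed.

Lemma inI3q_sum (I : Type) (r : seq I) (P : pred I) (F : I -> Lq) :
  (forall i, P i -> inI3q (F i)) -> inI3q (\sum_(i <- r | P i) F i).
Proof.
move=> IF; elim: r => [|i r IH]; first by rewrite big_nil; exact: inI3q0.
by rewrite big_cons; case: ifP => // /IF Fi; apply: inI3qD.
Qed.

Lemma inI3q_repr (p : L) : inI3q (Pi p) -> exists r : L, inI3 r /\ Pi r = Pi p.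
Proof.
move=> [s [Is ->]]; pose s' := [seq (repr x.1.1, repr x.1.2, repr x.2) | x <- s].
exists (flatten [seq lmul (lmul x.1.1 x.1.2) x.2 | x <- s']); split.
  by exists s'; split => // _ /mapP[x /Is[] ? ? ? ->].
by rewrite Pi_flatten !big_map; apply: eq_bigr => x _; rewrite !PiM !reprK.
Qed.

End Laurent.

Lemma sum_if_eq (R : nmodType) n (P : pred 'I_n) (l : 'I_n) (a : R) :
  \sum_(i < n | P i) (if i == l then a else 0) = if P l then a else 0.
Proof.
rewrite -big_mkcondr /=; case: ifP => Pl.
  by rewrite (big_pred1 l) // => i /=; case: eqP => [->|]; rewrite ?Pl ?andbF.
by rewrite big_pred0 // => i; case: eqP => [->|]; rewrite ?Pl ?andbF.
Qed.

Lemma sum_ord_split3 (R : nmodType) n (F : 'I_n -> R) (l : 'I_n) :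
  \sum_(i < n) F i =
  \sum_(i < n | (i < l)%N) F i + F l + \sum_(i < n | (l < i)%N) F i.
Proof.
rewrite (bigD1 l) //= (bigID (fun i : 'I_n => (i < l)%N)) /= addrCA addrA; congr (_ + _ + _).
  by apply: eq_bigl => i; rewrite andbC; case: ltnP => // il; rewrite neq_ltn il.
by apply: eq_bigl => i; rewrite -leqNgt leq_eqVlt neq_ltn; case: ltngtP.
Qed.

Section Moments.
Variable d : nat.
Local Notation L := (laurent d).
Local Notation M := (mono d).

Definition m0 (p : L) : int := mom (fun=> 1) p.
Definition m1 (i : 'I_d) (p : L) : int := mom (fun k => k i) p.
Definition M2 (i j : 'I_d) (p : L) : int := mom (fun k => k i * k j) p.
Definition Cb (i : 'I_d) (p : L) : int := mom (fun k => bin2z (k i)) p.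

Lemma Cb2 i (p : L) : Cb i p *+ 2 = M2 i i p - m1 i p.
Proof.
rewrite /Cb /M2 /m1 /mom -sumrMnl -sumrB; apply: eq_bigr => t _.
by rewrite -mulrnAr bin2zE mulrBr.
Qed.

Lemma m0_lmul (p q : L) : m0 (lmul p q) = m0 p * m0 q.
Proof.
rewrite /m0 mom_lmul big_distrlr; apply: eq_bigr => a _; apply: eq_bigr => b _.
by rewrite !mulr1.
Qed.

Lemma m1_lmul i (p q : L) : m1 i (lmul p q) = m1 i p * m0 q + m0 p * m1 i q.
Proof.
rewrite /m1 /m0 mom_lmul !big_distrlr -big_split; apply: eq_bigr => a _.
by rewrite -big_split; apply: eq_bigr => b _; rewrite /= ffunE; ring.
Qed.

Lemma M2_lmul i j (p q : L) : M2 i j (lmul p q) =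
  M2 i j p * m0 q + m1 i p * m1 j q + m1 j p * m1 i q + m0 p * M2 i j q.
Proof.
rewrite /M2 /m1 /m0 mom_lmul !big_distrlr -!big_split; apply: eq_bigr => a _.
by rewrite -!big_split; apply: eq_bigr => b _; rewrite /= !ffunE; ring.
Qed.

Definition low_moments_vanish (p : L) : Prop :=
  [/\ m0 p = 0, forall i, m1 i p = 0 & forall i j, M2 i j p = 0].

Lemma low_moments_prod3 (a b c : L) : inI a -> inI b -> inI c ->
  low_moments_vanish (lmul (lmul a b) c).
Proof.
rewrite /inI !eval1_mom -!/(m0 _) => a0 b0 c0; split=> [|i|i j].
- by rewrite !m0_lmul a0 !mul0r.
- by rewrite !m1_lmul !m0_lmul a0 b0 c0; ring.
- by rewrite !M2_lmul !m1_lmul !m0_lmul a0 b0 c0; ring.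
Qed.

Lemma low_moments_inI3 (r : L) : inI3 r -> low_moments_vanish r.
Proof.
move=> [s [Is rs]].
have mom_r phi : mom phi r = \sum_(x <- s) mom phi (lmul (lmul x.1.1 x.1.2) x.2).
  by rewrite (mom_equiv phi rs) mom_flatten big_map.
have vanish (F : L -> int) :
    (forall x, x \in s -> F (lmul (lmul x.1.1 x.1.2) x.2) = 0) ->
    \sum_(x <- s) F (lmul (lmul x.1.1 x.1.2) x.2) = 0.
  by move=> F0; rewrite big_seq big1.
have low x : x \in s -> low_moments_vanish (lmul (lmul x.1.1 x.1.2) x.2).
  by move=> /Is[]; exact: low_moments_prod3.
split=> [|i|i j]; rewrite /m0 /m1 /M2 mom_r vanish // => x /low[p0 p1 p2].
- exact: p0.
- exact: p1.
- exact: p2.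
Qed.

Lemma mom_fd phi : mom phi (fd d) =
  2 * d%:Z * phi (mz d) - \sum_(i < d) phi (evec i) - \sum_(i < d) phi (nvec i).
Proof.
have sum_units (v : 'I_d -> M) :
    \sum_(t <- [seq (-1, v i) | i <- enum 'I_d]) t.1 * phi t.2 = - \sum_(i < d) phi (v i).
  by rewrite big_map big_enum -sumrN; apply: eq_bigr => i _; rewrite /= mulN1r.
by rewrite /mom /fd big_cons big_cat !sum_units /= addrA.
Qed.

Lemma evecE (i l : 'I_d) : evec i l = if i == l then 1 else 0.
Proof. by rewrite ffunE; case: (i == l). Qed.

Lemma nvecE (i l : 'I_d) : nvec i l = if i == l then -1 else 0.
Proof. by rewrite ffunE; case: (i == l). Qed.

Lemma m0_fd : m0 (fd d) = 0.
Proof. by rewrite /m0 mom_fd !sumr_const card_ord -mulr_natr natz; ring. Qed.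

Lemma m1_fd l : m1 l (fd d) = 0.
Proof.
rewrite /m1 mom_fd ffunE mulr0.
under eq_bigr do rewrite evecE; under [X in _ - X]eq_bigr do rewrite nvecE.
by rewrite !(sum_if_eq xpredT); ring.
Qed.

Lemma M2_fd i j : M2 i j (fd d) = if i == j then -2 else 0.
Proof.
rewrite /M2 mom_fd !ffunE mul0r mulr0 sub0r.
have prod_delta (a : int) (k : 'I_d) :
    (if k == i then a else 0) * (if k == j then a else 0) =
    if k == i then (if i == j then a * a else 0) else 0.
  by case: eqP => [->|]; case: eqP; rewrite ?mulr0 ?mul0r.
under eq_bigr do rewrite !evecE prod_delta.
under [X in _ - X]eq_bigr do rewrite !nvecE prod_delta.
by rewrite !(sum_if_eq xpredT); case: eqP => _; ring.
Qed.

Lemma in_fI3_moments (g : L) : in_fI3 g ->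
  [/\ m0 g = 0, forall i, m1 i g = 0 &
      exists c, forall i j, M2 i j g = if i == j then c else 0].
Proof.
move=> [h [r [/low_moments_inI3[r0 r1 r2] gfr]]].
have mom_g phi : mom phi g = mom phi (lmul (fd d) h) + mom phi r.
  by rewrite (mom_equiv phi gfr) mom_cat.
split=> [|i|].
- by rewrite /m0 mom_g -!/(m0 _) r0 m0_lmul m0_fd; ring.
- by rewrite /m1 mom_g -!/(m1 _ _) r1 m1_lmul m0_fd m1_fd; ring.
exists (-2 * m0 h) => i j; rewrite /M2 mom_g -!/(M2 _ _ _) r2 M2_lmul !m1_fd m0_fd M2_fd.
by case: eqP => _; ring.
Qed.

End Moments.

Section Taylor.
Variable d : nat.
Local Notation L := (laurent d).
Local Notation M := (mono d).
Local Notation Lq := (Lq d).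
Local Open Scope quotient_scope.
Local Notation Pi := (\pi_Lq).

Definition X (l : 'I_d) : Lq := mon (evec l) - 1.

Lemma X_in_I l : ev (X l) = 0.
Proof.
have -> : X l = Pi [:: (1, evec l); (-1, mz d)].
  by rewrite Pi_sum !big_cons big_nil mon0 addr0 mulr1z mulrN1z.
by rewrite evPi /eval1 !big_cons big_nil /= addr0 addrN.
Qed.

(* The second-order Taylor polynomial of u^k in the X_i:
     1 + Lin k + Qdiag k + Qcross k, with Qcross k = sum_(j < i) k_i k_j X_i X_j
   written through the partial linear forms Lpart i k = sum_(j < i) k_j X_j. *)
Definition Lin (k : M) : Lq := \sum_(i < d) X i *~ k i.
Definition Lpart (i : 'I_d) (k : M) : Lq := \sum_(j < d | (j < i)%N) X j *~ k j.
Definition Qdiag (k : M) : Lq := \sum_(i < d) X i ^+ 2 *~ bin2z (k i).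
Definition Qcross (k : M) : Lq := \sum_(i < d) X i *~ k i * Lpart i k.
Definition Rem (k : M) : Lq := mon k - (1 + Lin k + Qdiag k + Qcross k).

(* The effect of a unit step k -> k + e_l on each part of the Taylor polynomial;
   in total the polynomial part changes by X_l (1 + Lin k) (see [Rem_step]). *)
Lemma madd_evecE (k : M) l i : madd k (evec l) i = k i + (if i == l then 1 else 0).
Proof. by rewrite !ffunE eq_sym; case: eqP. Qed.

Lemma Lin_step k l : Lin (madd k (evec l)) = Lin k + X l.
Proof.
rewrite /Lin; under eq_bigr do rewrite madd_evecE mulrzDr (fun_if (intmul _)) mulr1z mulr0z.
by rewrite big_split /= -big_mkcond big_pred1_eq.
Qed.

Lemma Lpart_step i k l :
  Lpart i (madd k (evec l)) = Lpart i k + (if (l < i)%N then X l else 0).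
Proof.
rewrite /Lpart; under eq_bigr do rewrite madd_evecE mulrzDr (fun_if (intmul _)) mulr1z mulr0z.
rewrite big_split /= -(sum_if_eq (fun j : 'I_d => (j < i)%N) l (X l)).
by congr (_ + _); apply: eq_bigr => j _; case: eqP => [->|].
Qed.

Lemma Qdiag_step k l : Qdiag (madd k (evec l)) = Qdiag k + X l ^+ 2 *~ k l.
Proof.
rewrite /Qdiag (bigD1 l) //= [in RHS](bigD1 l) //= madd_evecE eqxx bin2zS mulrzDr.
under eq_bigr => i /negbTE il do rewrite madd_evecE il addr0.
by rewrite addrAC.
Qed.

Lemma Qcross_step k l : Qcross (madd k (evec l)) =
  Qcross k + X l * (Lpart l k + \sum_(i < d | (l < i)%N) X i *~ k i).
Proof.
have term i : X i *~ (madd k (evec l)) i * Lpart i (madd k (evec l)) =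
    X i *~ k i * Lpart i k + (if (l < i)%N then X l * (X i *~ k i) else 0)
    + (if i == l then X l * Lpart l k else 0).
  rewrite Lpart_step madd_evecE; case: eqP => [->|_]; first by rewrite ltnn; ring.
  by case: ifP => _; ring.
rewrite /Qcross; under eq_bigr do rewrite term.
rewrite !big_split /= (sum_if_eq xpredT) -big_mkcond -big_distrr /=; ring.
Qed.

Lemma Rem_step k l :
  Rem (madd k (evec l)) = mon (evec l) * Rem k + X l * (Qdiag k + Qcross k).
Proof.
have Lin_split : Lin k = Lpart l k + X l *~ k l + \sum_(i < d | (l < i)%N) X i *~ k i.
  exact: sum_ord_split3.
rewrite /Rem monD Lin_step Qdiag_step Qcross_step Lin_split.
rewrite -[mon (evec l)](subrK 1) -/(X l); ring.
Qed.

Lemma Qcross_pairs k :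
  Qcross k = \sum_(i < d) \sum_(j < d | (j < i)%N) X i * X j *~ (k i * k j).
Proof.
apply: eq_bigr => i _; rewrite /Lpart big_distrr /=; apply: eq_bigr => j _; ring.
Qed.

Lemma XQ_in_I3 k l : inI3q (X l * (Qdiag k + Qcross k)).
Proof.
rewrite mulrDr Qcross_pairs !big_distrr /=; apply: inI3qD; apply: inI3q_sum => i _.
  by rewrite mulrzAr expr2 mulrA; apply/inI3qMz/inI3q_prod; rewrite X_in_I.
rewrite big_distrr /=; apply: inI3q_sum => j _.
by rewrite mulrzAr mulrA; apply/inI3qMz/inI3q_prod; rewrite X_in_I.
Qed.

(* Since u_l is a unit, the remainder lies in I^3 at k iff it does at k + e_l. *)
Lemma Rem_step_iff k l : inI3q (Rem k) <-> inI3q (Rem (madd k (evec l))).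
Proof.
have uK : mon (nvec l) * mon (evec l) = 1.
  by rewrite -monD -mon0; congr mon; apply/ffunP => i; rewrite !ffunE addNr.
split=> [IR|IR'].
  by rewrite Rem_step; apply: inI3qD; [apply: inI3qM | apply: XQ_in_I3].
have -> : Rem k = mon (nvec l) * (Rem (madd k (evec l)) - X l * (Qdiag k + Qcross k)).
  by rewrite Rem_step addrK mulrA uK mul1r.
by apply/inI3qM/inI3qB => //; exact: XQ_in_I3.
Qed.

Lemma mono_ind (P : M -> Prop) : P (mz d) ->
  (forall k l, P k <-> P (madd k (evec l))) -> forall k, P k.
Proof.
move=> P0 Pstep.
pose mset (k : M) l z : M := [ffun i => if i == l then z else k i].
have msetS k l z : madd (mset k l z) (evec l) = mset k l (z + 1).
  by apply/ffunP => i; rewrite !ffunE eq_sym; case: eqP; rewrite ?addr0.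
have msetK k l : mset k l (k l) = k by apply/ffunP => i; rewrite ffunE; case: eqP => [->|].
have Pline k l : P k -> forall z, P (mset k l z).
  move=> Pk z; rewrite -(subrK (k l) z); elim/int_rec: (z - k l) => [|n IH|n IH].
  - by rewrite add0r msetK.
  - by rewrite intS [1 + _]addrC addrAC -msetS -Pstep.
  - apply/(Pstep _ l); rewrite msetS (_ : _ + 1 = - n%:Z + k l) //.
    by rewrite intS; ring.
move=> k; pose trunc (s : seq 'I_d) : M := [ffun i => if i \in s then k i else 0].
have -> : k = trunc (enum 'I_d) by apply/ffunP => i; rewrite ffunE mem_enum.
elim: (enum 'I_d) => [|l s IH].
  by rewrite (_ : trunc [::] = mz d) //; apply/ffunP => i; rewrite !ffunE.
have -> : trunc (l :: s) = mset (trunc s) l (k l).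
  by apply/ffunP => i; rewrite !ffunE inE; case: eqP => [->|].
exact: Pline.
Qed.

Lemma Rem_in_I3 k : inI3q (Rem k).
Proof.
elim/mono_ind: k => [|k l]; last exact: Rem_step_iff.
rewrite /Rem mon0 /Lin /Qdiag Qcross_pairs !big1 ?addr0 ?subrr; first exact: inI3q0.
- by move=> i _; rewrite big1 // => j _; rewrite ffunE mul0r mulr0z.
- by move=> i _; rewrite ffunE mulr0z.
- by move=> i _; rewrite ffunE mulr0z.
Qed.

Lemma sum_mulrz_mom (Y : Lq) (f : M -> int) (p : L) :
  \sum_(t <- p) (Y *~ f t.2) *~ t.1 = Y *~ mom f p.
Proof. by rewrite /mom mulrz_sumr; apply: eq_bigr => t _; rewrite -mulrzA mulrC. Qed.

Lemma sum_mulrz_swap (I : Type) (r : seq I) (P : pred I) (F : I -> M -> Lq) (p : L) :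
  \sum_(t <- p) (\sum_(i <- r | P i) F i t.2) *~ t.1 =
  \sum_(i <- r | P i) \sum_(t <- p) F i t.2 *~ t.1.
Proof. by under eq_bigr do rewrite mulrz_suml; rewrite exchange_big. Qed.

Lemma sum_mulrz_lincomb (I : Type) (r : seq I) (P : pred I) (Y : I -> Lq)
    (f : I -> M -> int) (p : L) :
  \sum_(t <- p) (\sum_(i <- r | P i) Y i *~ f i t.2) *~ t.1 =
  \sum_(i <- r | P i) Y i *~ mom (f i) p.
Proof.
rewrite (sum_mulrz_swap _ _ (fun i k => Y i *~ f i k)).
by apply: eq_bigr => i _; apply: sum_mulrz_mom.
Qed.

Lemma Pi_expansion (p : L) : Pi p =
  \sum_(t <- p) Rem t.2 *~ t.1 + 1 *~ m0 p + \sum_(i < d) X i *~ m1 i p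
  + \sum_(i < d) X i ^+ 2 *~ Cb i p
  + \sum_(i < d) \sum_(j < d | (j < i)%N) X i * X j *~ M2 i j p.
Proof.
rewrite Pi_sum (eq_bigr (fun t => Rem t.2 *~ t.1
    + (1 + Lin t.2 + Qdiag t.2 + Qcross t.2) *~ t.1)); last first.
  by move=> t _; rewrite -mulrzDl /Rem subrK.
rewrite big_split /= -!addrA; congr (_ + _).
under eq_bigr do rewrite !mulrzDl Qcross_pairs.
rewrite !big_split /= !addrA; congr (_ + _ + _ + _).
- by rewrite -mulrz_sumr; congr (_ *~ _); apply: eq_bigr => t _; rewrite mulr1.
- exact: (sum_mulrz_lincomb _ _ X (fun i k => k i)).
- exact: (sum_mulrz_lincomb _ _ (fun i => X i ^+ 2) (fun i k => bin2z (k i))).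
rewrite (sum_mulrz_swap _ _ (fun (i : 'I_d) k =>
  \sum_(j < d | (j < i)%N) X i * X j *~ (k i * k j))).
by apply: eq_bigr => i _; apply: (sum_mulrz_lincomb _ _ (fun j => X i * X j) (fun j k => k i * k j)).
Qed.

Lemma low_moments_vanish_I3 (p : L) : low_moments_vanish p -> inI3q (Pi p).
Proof.
move=> [p0 p1 p2]; have Cb0 i : Cb i p = 0.
  by apply/eqP; move: (Cb2 i p); rewrite p1 p2 subr0 => /eqP; rewrite mulrn_eq0.
rewrite Pi_expansion p0 mulr0z addr0.
have -> : \sum_(i < d) X i *~ m1 i p = 0 by apply: big1 => i _; rewrite p1.
have -> : \sum_(i < d) X i ^+ 2 *~ Cb i p = 0 by apply: big1 => i _; rewrite Cb0.
have -> : \sum_(i < d) \sum_(j < d | (j < i)%N) X i * X j *~ M2 i j p = 0.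
  by apply: big1 => i _; apply: big1 => j _; rewrite p2.
rewrite !addr0; apply: inI3q_sum => t _; exact/inI3qMz/Rem_in_I3.
Qed.

(* Sufficiency: if m0, m1 and the off-diagonal M2 vanish and the diagonal M2 all
   equal 2 Cb_i0(g), then p = g - f * h with h = -Cb_i0(g) has vanishing moments
   of order at most two, so g = f * h + p lies in (f) + I^3. *)
Lemma moments_in_fI3 (g : L) : (0 < d)%N ->
  m0 g = 0 -> (forall i, m1 i g = 0) -> (forall i j, i != j -> M2 i j g = 0) ->
  (forall i j, M2 i i g = M2 j j g) -> in_fI3 g.
Proof.
move=> d_gt0 g0 g1 g2 g3; pose i0 : 'I_d := Ordinal d_gt0.
pose h : L := [:: (- Cb i0 g, mz d)]; pose p := g ++ lneg (lmul (fd d) h).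
have m0h : m0 h = - Cb i0 g by rewrite /m0 /mom big_seq1 mulr1.
have mom_p phi : mom phi p = mom phi g - mom phi (lmul (fd d) h).
  by rewrite mom_cat mom_neg.
have low_p : low_moments_vanish p.
  split=> [|i|i j].
  - rewrite /m0 mom_p -/(m0 g) -/(m0 (lmul _ _)).
    by rewrite g0 m0_lmul m0_fd; ring.
  - rewrite /m1 mom_p -/(m1 i g) -/(m1 i (lmul _ _)).
    by rewrite g1 m1_lmul m0_fd m1_fd; ring.
  rewrite /M2 mom_p -/(M2 i j g) -/(M2 i j (lmul _ _)).
  rewrite M2_lmul M2_fd !m1_fd m0_fd m0h !mul0r !addr0.
  case: eqP => [<-|/eqP ij]; last by rewrite g2 // mul0r subrr.
  have M2_diag : M2 i0 i0 g = Cb i0 g *+ 2 by rewrite Cb2 g1 subr0.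
  by rewrite (g3 i i0) M2_diag; ring.
have [r [r3 rp]] := inI3q_repr (low_moments_vanish_I3 low_p).
exists h, r; split => //; apply/eqPi.
by rewrite /ladd PiD rp /p PiD PiN addrC subrK.
Qed.

End Taylor.

Unset Implicit Arguments.

Theorem lemma2p5 (d : nat) (hd : (2 <= d)%N) (g : laurent d) :
  in_fI3 g <->
  [/\ \sum_(k <- lsupp g) coef g k = 0,
      (forall i : 'I_d, \sum_(k <- lsupp g) coef g k * k i = 0),
      (forall i j : 'I_d, i != j -> \sum_(k <- lsupp g) coef g k * (k i * k j) = 0)
    & (forall i j : 'I_d, i != j ->
         \sum_(k <- lsupp g) coef g k * (k i ^+ 2 - k j ^+ 2) = 0)].
Proof.
have EA : \sum_(k <- lsupp g) coef g k = m0 g.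
  by rewrite /m0 -mom_lsupp; apply: eq_bigr => k _; rewrite mulr1.
have EB i : \sum_(k <- lsupp g) coef g k * k i = m1 i g by exact: mom_lsupp.
have EC i j : \sum_(k <- lsupp g) coef g k * (k i * k j) = M2 i j g by exact: mom_lsupp.
have ED i j : \sum_(k <- lsupp g) coef g k * (k i ^+ 2 - k j ^+ 2) = M2 i i g - M2 j j g.
  by rewrite /M2 -!mom_lsupp -sumrB; apply: eq_bigr => k _; rewrite mulrBr !expr2.
rewrite EA; split.
  move=> /in_fI3_moments[g0 g1 [c g2]]; split=> // [i|i j ij|i j ij].
  - by rewrite EB.
  - by rewrite EC g2 (negbTE ij).
  - by rewrite ED !g2 !eqxx subrr.
move=> [g0 g1 g2 g3]; apply: moments_in_fI3 => // [|i|i j ij|i j].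
- exact: leq_trans hd.
- by rewrite -EB.
- by rewrite -EC g2.
case: (eqVneq i j) => [-> //|ij]; apply/eqP; rewrite -subr_eq0 -ED g3 //.
Qed.
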